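(* The set $\{t_1^{c_1}\cdots t_n^{c_n}g_w : w\in\mathfrak S(n),\ 0\le c_1,\ldots,c_n\le r-1\}$ is an $R$-basis of $\mathcal H_{n,r}$.
   Context: Standing setup: $R$ is an integral domain, $n\ge 1$, $r\ge 1$, and $q,u_1,\ldots,u_r\in R$ with $q$ invertible in $R$ and $\Delta:=\prod_{1\le j<i\le r}(u_i-u_j)$ invertible in $R$. For $1\le c\le r$ let $F_c(X)\in R[X]$ be the unique polynomial of degree $\le r-1$ with $F_c(u_{c'})=\delta_{c,c'}\Delta$ for all $1\le c'\le r$. The modified Ariki–Koike (Shoji) algebra $\mathcal H_{n,r}=\mathcal H_{n,r}(R,q,u_1,\ldots,u_r)$ is the associative $R$-algebra generated by $t_1,\ldots,t_n,T_1,\ldots,T_{n-1}$ subject to: $(T_i-q)(T_i+q^{-1})=0$; $(t_i-u_1)\cdots(t_i-u_r)=0$; $T_iT_{i+1}T_i=T_{i+1}T_iT_{i+1}$; $T_iT_j=T_jT_i$ for $|i-j|\ge2$; $t_it_j=t_jt_i$; $T_jt_k=t_kT_j$ for $k\ne j,j+1$; and for $2\le j\le n$: $T_{j-1}t_j=t_{j-1}T_{j-1}+\Delta^{-2}\sum_{1\le c_1<c_2\le r}(u_{c_2}-u_{c_1})(q-q^{-1})F_{c_1}(t_{j-1})F_{c_2}(t_j)$ and $T_{j-1}t_{j-1}=t_jT_{j-1}-\Delta^{-2}\sum_{1\le c_1<c_2\le r}(u_{c_2}-u_{c_1})(q-q^{-1})F_{c_1}(t_{j-1})F_{c_2}(t_j)$.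 It is known (Shoji) that $\{t_1^{c_1}\cdots t_n^{c_n}T_w\}$ ($w\in\mathfrak S(n)$, $0\le c_i\le r-1$) is an $R$-basis. Write $[1,r]=\{1,\ldots,r\}$; for $\mathbf k=(k_1,\ldots,k_n)\in[1,r]^n$ set $b_{\mathbf k}:=\prod_{i=1}^n\prod_{1\le j\le r,\,j\ne k_i}\frac{t_i-u_j}{u_{k_i}-u_j}$. For $1\le i,j\le n$ let $B'_{i,j}:=-(q-q^{-1})\sum_{\mathbf k,\ k_i<k_j}b_{\mathbf k}$; for $1\le i\le n-1$ let $g_i:=T_i+B'_{i,i+1}$. For $w\in\mathfrak S(n)$ with reduced expression $w=s_{i_1}\cdots s_{i_l}$, $T_w:=T_{i_1}\cdots T_{i_l}$ and $g_w:=g_{i_1}\cdots g_{i_l}$ (independent of the reduced expression). *)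

From HB Require Import structures.
From mathcomp Require Import all_boot all_order all_algebra all_fingroup.
Set Implicit Arguments. Unset Strict Implicit. Unset Printing Implicit Defensive.
Import GRing.Theory.
Local Open Scope ring_scope.

(* Conventions: generators t_1..t_n, T_1..T_{n-1} and parameters u_1..u_r are
   given as functions on nat, only the values at the indices in range matter
   (1-based indexing as in the paper). *)

Definition peval (R : nzRingType) (A : lalgType R) (p : {poly R}) (a : A) : A :=
  \sum_(i < size p) p`_i *: a ^+ i.

Definition Delta (R : nzRingType) (r : nat) (u : nat -> R) : R :=
  \prod_(1 <= i < r.+1) \prod_(1 <= j < i) (u i - u j).

Definition is_F (R : nzRingType) (r : nat) (u : nat -> R) (F : nat -> {poly R}) :=
  forall c, (1 <= c <= r)%N ->
    (size (F c) <= r)%N /\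
    forall c', (1 <= c' <= r)%N -> (F c).[u c'] = (if c == c' then Delta r u else 0).

Section AK.
Variables (R : comUnitRingType) (A : algType R) (n r : nat).
Variables (q : R) (u : nat -> R) (F : nat -> {poly R}).
Variables (t T : nat -> A).

Definition AKcorr (j : nat) : A :=
  \sum_(1 <= c1 < r.+1) \sum_(c1.+1 <= c2 < r.+1)
     (((Delta r u) ^+ 2)^-1 * ((u c2 - u c1) * (q - q^-1)))
       *: (peval (F c1) (t j.-1) * peval (F c2) (t j)).

Definition AK_relations : Prop :=
  (forall i, (1 <= i <= n.-1)%N -> (T i - q%:A) * (T i + (q^-1)%:A) = 0) /\
      (forall i, (1 <= i <= n)%N -> \prod_(1 <= c < r.+1) (t i - (u c)%:A) = 0) /\
      (forall i, (1 <= i)%N -> (i.+1 <= n.-1)%N ->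
          T i * T i.+1 * T i = T i.+1 * T i * T i.+1) /\
      (forall i j, (1 <= i <= n.-1)%N -> (1 <= j <= n.-1)%N ->
          (i.+1 < j)%N || (j.+1 < i)%N -> T i * T j = T j * T i) /\
      (forall i j, (1 <= i <= n)%N -> (1 <= j <= n)%N -> t i * t j = t j * t i) /\
      (forall j k, (1 <= j <= n.-1)%N -> (1 <= k <= n)%N -> k != j -> k != j.+1 ->
          T j * t k = t k * T j) /\
      (forall j, (2 <= j <= n)%N ->
          T j.-1 * t j = t j.-1 * T j.-1 + AKcorr j /\
          T j.-1 * t j.-1 = t j * T j.-1 - AKcorr j).

(* k in [1,r]^n is encoded as k : {ffun 'I_n -> 'I_r}, with k_m = (k (m-1)).+1 *)
Definition kcomp (k : {ffun 'I_n -> 'I_r}) (m : nat) : nat :=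
  odflt 0%N (omap (fun o : 'I_n => (k o).+1) (insub m.-1)).

Definition bk (k : {ffun 'I_n -> 'I_r}) : A :=
  \prod_(i < n) \prod_(j < r | j != k i)
     ((t i.+1 - (u j.+1)%:A) * ((u (k i).+1 - u j.+1)^-1)%:A).

Definition Bp (i j : nat) : A :=
  - (q - q^-1) *: \sum_(k : {ffun 'I_n -> 'I_r} | (kcomp k i < kcomp k j)%N) bk k.

Definition g (i : nat) : A := T i + Bp i i.+1.

End AK.

(* Simple transposition s_i = (i, i+1) in S(n) (1-based), as a permutation of
   'I_n (positions i-1 and i). *)
Definition stransp (n i : nat) : 'S_n :=
  match insub i.-1, insub i with
  | Some x, Some y => tperm x y
  | _, _ => 1%g
  end.

Definition word_ok (n : nat) (s : seq nat) : bool :=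
  all (fun i => (1 <= i <= n.-1)%N) s.

Definition word_perm (n : nat) (s : seq nat) : 'S_n :=
  (\prod_(i <- s) stransp n i)%g.

Definition reduced_expr (n : nat) (w : 'S_n) (s : seq nat) : Prop :=
  [/\ word_ok n s, word_perm n s = w &
      forall s', word_ok n s' -> word_perm n s' = w -> (size s <= size s')%N].

Definition word_prod (R : nzRingType) (A : lalgType R) (X : nat -> A) (s : seq nat) : A :=
  \prod_(i <- s) X i.

Definition is_Rbasis (R : nzRingType) (M : lmodType R) (I : finType) (f : I -> M) : Prop :=
  forall m : M, exists! c : {ffun I -> R}, m = \sum_(i : I) c i *: f i.

Definition tmon (R : nzRingType) (A : lalgType R) (n r : nat) (t : nat -> A)
    (c : {ffun 'I_n -> 'I_r}) : A :=
  \prod_(i < n) t i.+1 ^+ c i.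

(* Write [T_w] for the product of the [T_i] along the chosen reduced word of [w],
   and [Q] for the span of the monomials [t^c]; it is a subalgebra since the [t_i]
   commute and are roots of a monic polynomial of degree [r].  The mixed relations
   give [T_j Q <= Q T_j + Q] and put [B'_(i,i+1)] in [Q].  With the quadratic
   relation and Matsumoto's theorem ([T_w] does not depend on the reduced word),
   [T_i T_w] lies in the span of the [t^c T_v] with [l(v) <= l(w) + 1], so that
   [t^c g_w - t^c T_w] lies in the span of the [t^c' T_v] with [l(v) < l(w)].
   A basis changed by a unitriangular matrix is again a basis. *)

From HB Require Import structures.
From mathcomp Require Import all_boot all_order all_algebra all_fingroup.
From mathcomp Require Import zify.
Set Implicit Arguments. Unset Strict Implicit. Unset Printing Implicit Defensive.
Import GRing.Theory.

Section Permutations.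
Variable m : nat.
Local Notation N := m.+1.
Implicit Types (w : 'S_N) (s : seq nat).

Lemma stransp_tperm i : (1 <= i <= m)%N ->
  stransp N i = tperm (inord i.-1 : 'I_N) (inord i).
Proof.
move=> /andP[i_gt0 i_le]; rewrite /stransp.
case: insubP => [x _ val_x|]; last by rewrite (_ : i.-1 < N)%N //; lia.
case: insubP => [y _ val_y|]; last by rewrite (_ : i < N)%N //; lia.
by congr tperm; apply: val_inj; rewrite /= inordK //; lia.
Qed.

Lemma word_perm_cons i s : word_perm N (i :: s) = (stransp N i * word_perm N s)%g.
Proof. by rewrite /word_perm big_cons. Qed.

Lemma stranspK i w : (stransp N i * (stransp N i * w))%g = w.
Proof.
rewrite mulgA /stransp.
by case: (insub i.-1 : option 'I_N) => [x|]; case: (insub i : option 'I_N) => [y|];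
  rewrite ?mul1g ?tperm2 ?mul1g.
Qed.

(* Positions are 0-based: [s_i] swaps [i-1] and [i].  As [(s_i * w) x = w (s_i x)],
   [descent i w] says that [s_i * w] has one inversion less than [w]. *)
Definition descent i w : bool := (w (inord i) < w (inord i.-1))%N.

Definition inv_count w : nat :=
  \sum_(p : 'I_N * 'I_N) ((p.1 < p.2) && (w p.2 < w p.1))%N.

Lemma tperm_succ_val (a b x : 'I_N) : val b = (val a).+1 ->
  val (tperm a b x) = if x == a then val b else if x == b then val a else val x.
Proof.
move=> hb; case: tpermP => [->|->|/eqP xa /eqP xb]; rewrite ?eqxx //.
  by case: eqP => // eba; move: hb; rewrite -eba; lia.
by rewrite (negPf xa) (negPf xb).
Qed.

Lemma tperm_succ_ltn (a b x y : 'I_N) : val b = (val a).+1 ->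
  (x, y) != (a, b) -> (x, y) != (b, a) ->
  (tperm a b x < tperm a b y)%N = (x < y)%N.
Proof.
move=> hb; rewrite !tperm_succ_val // !xpair_eqE -!(inj_eq val_inj) hb.
rewrite -[(x < y)%N]/(val x < val y)%N.
move: (val x) (val y) (val a) => X Y Z.
by repeat case: eqP => ? /=; lia.
Qed.

(* Reindexing by [tau] matches the inversions of [tau * w] with those of [w],
   except for the pair swapped by [tau]. *)
Lemma inv_count_stransp i w : (1 <= i <= m)%N ->
  (inv_count (stransp N i * w)%g + descent i w = inv_count w + ~~ descent i w)%N.
Proof.
move=> hi; rewrite stransp_tperm //.
set a : 'I_N := inord i.-1; set b : 'I_N := inord i; set tau := tperm a b.
have hb : val b = (val a).+1 by rewrite /a /b /= !inordK; lia.
have lt_ab : (a < b)%N by rewrite -[(a < b)%N]/(val a < val b)%N hb.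
have ab : a != b by apply/eqP => eab; move: hb; rewrite eab; lia.
have tau_inj : injective (fun p : 'I_N * 'I_N => (tau p.1, tau p.2)).
  by move=> [x1 x2] [y1 y2] /= [/perm_inj -> /perm_inj ->].
rewrite /inv_count [X in (X + _)%N](reindex_inj tau_inj) /=.
have tauK (p : 'I_N * 'I_N) :
    ((tau * w)%g (tau p.2) < (tau * w)%g (tau p.1))%N = (w p.2 < w p.1)%N.
  by rewrite !permM !tpermK.
under eq_bigr => p _ do rewrite tauK.
have ba : (b, a) != (a, b) by rewrite xpair_eqE (negPf ab) andbF.
rewrite (bigD1 (a, b)) // (bigD1 (b, a)) //= [in RHS](bigD1 (a, b)) //.
rewrite [in RHS](bigD1 (b, a)) //=.
under eq_bigr => p /andP[h1 h2] do rewrite /tau (tperm_succ_ltn hb h1 h2).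
rewrite /tau tpermL tpermR /descent -/a -/b lt_ab ltnNge (ltnW lt_ab) /=.
have : w a != w b by rewrite (inj_eq perm_inj).
by rewrite -(inj_eq val_inj) /=; case: ltngtP; lia.
Qed.

Lemma inv_count1 : inv_count 1 = 0%N.
Proof. by rewrite /inv_count big1 // => p _; rewrite !perm1; case: ltngtP. Qed.

Lemma inv_count_descent i w : (1 <= i <= m)%N -> descent i w ->
  (inv_count (stransp N i * w)%g).+1 = inv_count w.
Proof. by move=> hi Di; have := inv_count_stransp w hi; rewrite Di /=; lia. Qed.

Lemma inv_count_word s : word_ok N s -> (inv_count (word_perm N s) <= size s)%N.
Proof.
elim: s => [|i s IH] /=; first by rewrite /word_perm big_nil inv_count1.
case/andP=> hi /IH; rewrite word_perm_cons.
by have := inv_count_stransp (word_perm N s) hi; case: descent => /=; lia.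
Qed.

Lemma descent_free_perm1 w : (forall i, (1 <= i <= m)%N -> ~~ descent i w) -> w = 1%g.
Proof.
move=> nodesc; pose f k := val (w (inord k)).
have f_incr k : (k < m)%N -> (f k < f k.+1)%N.
  move=> hk; have := nodesc k.+1 ltac:(lia); rewrite /descent /= -leqNgt.
  rewrite leq_eqVlt => /orP[/eqP e|//].
  by have := perm_inj (val_inj e); move/(congr1 val); rewrite /= !inordK; lia.
have f_grow j k : (k + j <= m)%N -> (f k + j <= f (k + j))%N.
  elim: j => [|j IHj] hkj; first by rewrite !addn0.
  by have := IHj ltac:(lia); have := f_incr (k + j) ltac:(lia); rewrite !addnS; lia.
apply/permP => x; rewrite perm1; apply: val_inj.
have ex := esym (inord_val x); have := leq_ord x => le_xm.
have h1 := f_grow x 0%N ltac:(lia).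
have h2 := f_grow (m - x)%N x ltac:(lia).
have h3 : (f (x + (m - x)) < N)%N by exact: ltn_ord.
by rewrite /f -ex in h1 h2 h3 *; move: h1 h2 h3 => /=; lia.
Qed.

Lemma exists_descent w : w != 1%g -> exists2 i, (1 <= i <= m)%N & descent i w.
Proof.
move=> w1; case: (boolP [exists i : 'I_N, (1 <= i <= m)%N && descent i w]).
  by case/existsP => i /andP[]; exists i.
move=> hn; case/eqP: w1; apply: descent_free_perm1 => i hi; apply/negP => Di.
by case/existsP: hn; exists (inord i); rewrite inordK ?hi ?Di //; lia.
Qed.

Lemma descent_stranspK i w : (1 <= i <= m)%N ->
  descent i (stransp N i * w)%g = ~~ descent i w.
Proof.
move=> hi; have := inv_count_stransp w hi.
have := inv_count_stransp (stransp N i * w)%g hi; rewrite stranspK.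
by case: (descent i w); case: (descent i _) => //=; lia.
Qed.

Definition reduced_word s : bool :=
  word_ok N s && (size s == inv_count (word_perm N s)).

Lemma reduced_word_size s : reduced_word s -> size s = inv_count (word_perm N s).
Proof. by case/andP=> _ /eqP. Qed.

Lemma exists_reduced_word w : exists2 s, reduced_word s & word_perm N s = w.
Proof.
have [k] := ubnP (inv_count w); elim: k w => // k IH w.
case: (eqVneq w 1%g) => [-> _|w1 lt_wk].
  by exists [::]; rewrite /reduced_word /word_perm big_nil ?inv_count1.
have [i hi Di] := exists_descent w1; have len := inv_count_descent hi Di.
have [s /andP[ok /eqP sz] ps] := IH (stransp N i * w)%g ltac:(lia).
have psi : word_perm N (i :: s) = w by rewrite word_perm_cons ps stranspK.
exists (i :: s) => //.
by rewrite /reduced_word /= hi ok psi sz ps len eqxx.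
Qed.

Lemma reduced_expr_reduced w s : reduced_expr w s -> reduced_word s.
Proof.
case=> ok ps min; have [s' rs' ps'] := exists_reduced_word w.
have /andP[ok' _] := rs'.
have := min s' ok' ps'; rewrite (reduced_word_size rs') ps' => le1.
have := inv_count_word ok; rewrite ps => le2.
by rewrite /reduced_word ok ps eqn_leq le1 le2.
Qed.

Lemma reduced_expr1 s : reduced_expr (1%g : 'S_N) s -> s = [::].
Proof.
move=> red; have := reduced_word_size (reduced_expr_reduced red).
by case: red => _ -> _; rewrite inv_count1; case: s.
Qed.

Lemma reduced_word_cons i s : reduced_word (i :: s) ->
  [/\ (1 <= i <= m)%N, descent i (word_perm N (i :: s)) & reduced_word s].
Proof.
case/andP=> /andP[hi ok] /eqP; rewrite word_perm_cons /= => sz.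
have {}ok : word_ok N s := ok; have le_s := inv_count_word ok.
set v := word_perm N s in sz le_s *.
have e1 := inv_count_stransp v hi.
have e2 := inv_count_stransp (stransp N i * v)%g hi; rewrite stranspK in e2.
rewrite /reduced_word ok hi -/v.
case: (descent i v) e1 => /= e1; first lia.
by case: (descent i _) e2 => /= e2; [split=> //; apply/eqP | ]; lia.
Qed.

Lemma reduced_word_cat p s : word_ok N p -> reduced_word s ->
  (size p + inv_count (word_perm N s))%N = inv_count (word_perm N (p ++ s)) ->
  reduced_word (p ++ s).
Proof.
rewrite /reduced_word /word_ok all_cat => okp /andP[oks /eqP szs] sz.
by rewrite okp oks size_cat szs sz /=.
Qed.

Lemma reduced_word_cons_descent i s : (1 <= i <= m)%N -> reduced_word s ->
  ~~ descent i (word_perm N s) -> reduced_word (i :: s).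
Proof.
move=> hi rs nDi; apply: (reduced_word_cat (p := [:: i])) rs _; first by rewrite /= hi.
rewrite /= word_perm_cons; have := inv_count_stransp (word_perm N s) hi.
by rewrite (negPf nDi) /=; lia.
Qed.

Definition stransp_pos j k : nat :=
  if k == j.-1 then j else if k == j then j.-1 else k.

Local Ltac stransp_pos_cases :=
  rewrite /stransp_pos /=;
  repeat (match goal with |- context [ (?a == ?b) ] =>
    lazymatch a with context [ if _ then _ else _ ] => fail | _ =>
    lazymatch b with context [ if _ then _ else _ ] => fail | _ =>
    case: (@eqP nat a b) => ? /= end end end);
  try lia.

Lemma stransp_pos_le j k : (1 <= j <= m)%N -> (k <= m)%N -> (stransp_pos j k <= m)%N.
Proof. by rewrite /stransp_pos => hj hk; repeat case: eqP => ? //=; lia. Qed.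

Lemma stransp_inord j k : (1 <= j <= m)%N -> (k <= m)%N ->
  stransp N j (inord k) = inord (stransp_pos j k).
Proof.
move=> hj hk; rewrite stransp_tperm //; apply: val_inj.
rewrite tperm_succ_val /=; last by rewrite !inordK //; lia.
rewrite -!(inj_eq val_inj) /= !inordK; try lia.
all: try by have := stransp_pos_le hj hk; lia.
all: stransp_pos_cases.
Qed.

Lemma stransp_comm i j : (1 <= i <= m)%N -> (1 <= j <= m)%N ->
  (i.+1 < j)%N || (j.+1 < i)%N ->
  (stransp N i * stransp N j = stransp N j * stransp N i)%g.
Proof.
move=> hi hj hij; apply/permP => x.
rewrite !permM -(inord_val x) !stransp_inord ?stransp_pos_le ?leq_ord //.
by congr inord; stransp_pos_cases.
Qed.

Lemma stransp_braid i : (1 <= i)%N -> (i.+1 <= m)%N ->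
  (stransp N i * stransp N i.+1 * stransp N i =
   stransp N i.+1 * stransp N i * stransp N i.+1)%g.
Proof.
move=> h1 h2; apply/permP => x.
rewrite !permM -(inord_val x) !stransp_inord ?stransp_pos_le ?leq_ord //; try lia.
by congr inord; stransp_pos_cases.
Qed.

Lemma descent_stransp i j w : (1 <= i <= m)%N -> (1 <= j <= m)%N ->
  descent i (stransp N j * w)%g =
  (w (inord (stransp_pos j i)) < w (inord (stransp_pos j i.-1)))%N.
Proof. by move=> hi hj; rewrite /descent !permM !stransp_inord //; lia. Qed.

Lemma descent_far i j w : (1 <= i <= m)%N -> (1 <= j <= m)%N ->
  (i.+1 < j)%N || (j.+1 < i)%N -> descent i (stransp N j * w)%g = descent i w.
Proof.
by move=> hi hj hij; rewrite descent_stransp // /descent;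
  congr (w (inord _) < w (inord _))%N; stransp_pos_cases.
Qed.

Lemma descent_succ_stransp i w : (1 <= i)%N -> (i.+1 <= m)%N ->
  descent i w -> descent i.+1 w -> descent i.+1 (stransp N i * w)%g.
Proof.
move=> h1 h2; rewrite descent_stransp //; try lia.
rewrite /stransp_pos /descent /= eqxx; case: eqP => [?|_]; first lia.
case: eqP => [?|_]; first lia.
case: eqP => [?|_]; first lia.
by move=> a b; apply: ltn_trans b a.
Qed.

Lemma descent_stransp_succ_stransp i w : (1 <= i)%N -> (i.+1 <= m)%N -> descent i.+1 w ->
  descent i (stransp N i.+1 * (stransp N i * w))%g.
Proof.
move=> h1 h2; rewrite /descent !permM !stransp_inord ?stransp_pos_le //; try lia.
by stransp_pos_cases; rewrite /descent /=.
Qed.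

Lemma far_descents_reduced i j w : (1 <= i <= m)%N -> (1 <= j <= m)%N ->
  (i.+1 < j)%N || (j.+1 < i)%N -> descent i w -> descent j w ->
  exists s, [/\ reduced_word [:: i, j & s], reduced_word [:: j, i & s],
    word_perm N [:: i, j & s] = w & word_perm N [:: j, i & s] = w].
Proof.
move=> hi hj far Di Dj; have far' : (j.+1 < i)%N || (i.+1 < j)%N by rewrite orbC.
have Dj' : descent j (stransp N i * w)%g by rewrite descent_far.
set x := (stransp N j * (stransp N i * w))%g.
have [s rs ps] := exists_reduced_word x.
have len : (inv_count x).+2 = inv_count w.
  by rewrite inv_count_descent // inv_count_descent.
have pij : word_perm N [:: i, j & s] = w by rewrite !word_perm_cons ps !stranspK.
have pji : word_perm N [:: j, i & s] = w.
  by rewrite !word_perm_cons ps /x !mulgA (stransp_comm hj hi far') -!mulgA !stranspK.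
by exists s; split=> //;
  [apply: (reduced_word_cat (p := [:: i; j])) | apply: (reduced_word_cat (p := [:: j; i]))];
  rewrite //= ?hi ?hj ?pij ?pji ?ps -?len.
Qed.

Lemma succ_descents_reduced i w : (1 <= i)%N -> (i.+1 <= m)%N ->
  descent i w -> descent i.+1 w ->
  exists s, [/\ reduced_word [:: i, i.+1, i & s], reduced_word [:: i.+1, i, i.+1 & s],
    word_perm N [:: i, i.+1, i & s] = w & word_perm N [:: i.+1, i, i.+1 & s] = w].
Proof.
move=> h1 h2 Di Di1; have hi : (1 <= i <= m)%N by lia.
set x := (stransp N i * (stransp N i.+1 * (stransp N i * w)))%g.
have [s rs ps] := exists_reduced_word x.
have len : (inv_count x).+3 = inv_count w.
  rewrite inv_count_descent ?descent_stransp_succ_stransp // inv_count_descent //.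
    exact: inv_count_descent.
  exact: descent_succ_stransp.
have p1 : word_perm N [:: i, i.+1, i & s] = w by rewrite !word_perm_cons ps !stranspK.
have p2 : word_perm N [:: i.+1, i, i.+1 & s] = w.
  by rewrite !word_perm_cons ps /x !mulgA -(stransp_braid h1 h2) -!mulgA !stranspK.
by exists s; split=> //; [apply: (reduced_word_cat (p := [:: i; i.+1; i])) |
  apply: (reduced_word_cat (p := [:: i.+1; i; i.+1]))];
  rewrite //= ?hi ?h2 ?p1 ?p2 ?ps -?len.
Qed.

End Permutations.

Local Open Scope ring_scope.
Section Matsumoto.
Variable m : nat.
Local Notation N := m.+1.
Variables (R : nzRingType) (A : lalgType R) (T : nat -> A).
Hypothesis T_braid : forall i, (1 <= i)%N -> (i.+1 <= m)%N ->
  T i * T i.+1 * T i = T i.+1 * T i * T i.+1.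
Hypothesis T_comm : forall i j, (1 <= i <= m)%N -> (1 <= j <= m)%N ->
  (i.+1 < j)%N || (j.+1 < i)%N -> T i * T j = T j * T i.

Lemma word_prod_cons i s : word_prod T (i :: s) = T i * word_prod T s.
Proof. by rewrite /word_prod big_cons. Qed.

(* Reduced words of [w] with the same first letter agree
   by induction on their tails.  First letters [i != j] are both descents of [w],
   so [w] has reduced words beginning with [i j] and [j i], or with [i j i] and
   [j i j] when [|i - j| = 1], whose products agree by the relations. *)
Theorem matsumoto s s' : reduced_word m s -> reduced_word m s' ->
  word_perm N s = word_perm N s' -> word_prod T s = word_prod T s'.
Proof.
have [k] := ubnP (size s); elim: k s s' => // k IH s s' lt_sk rs rs' ps.
have : size s = size s' by rewrite (reduced_word_size rs) (reduced_word_size rs') ps.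
case: s s' rs rs' ps lt_sk => [|i s] [|j s'] // rs rs' ps lt_sk _.
set w := word_perm N (i :: s) in ps; move/esym: ps => ps.
have [hi Di _] := reduced_word_cons rs.
have [hj Dj _] := reduced_word_cons rs'; rewrite ps in Dj.
have same_head l p p' : reduced_word m (l :: p) -> reduced_word m (l :: p') ->
    word_perm N (l :: p) = w -> word_perm N (l :: p') = w ->
    word_prod T (l :: p) = word_prod T (l :: p').
  move=> rp rp' pp pp'; have := reduced_word_size rp.
  rewrite pp -(reduced_word_size rs) /= => sz.
  have [_ _ {}rp] := reduced_word_cons rp; have [_ _ {}rp'] := reduced_word_cons rp'.
  rewrite !word_prod_cons; congr (_ * _); apply: IH => //; first by move: lt_sk => /=; lia.
  by apply: (mulgI (stransp N l)); rewrite -!word_perm_cons pp pp'.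
have bridge p p' : reduced_word m (i :: p) -> reduced_word m (j :: p') ->
    word_perm N (i :: p) = w -> word_perm N (j :: p') = w ->
    word_prod T (i :: p) = word_prod T (j :: p') ->
    word_prod T (i :: s) = word_prod T (j :: s').
  by move=> rp rp' pp pp' e; rewrite (same_head i s p) // e (same_head j p' s').
case: (eqVneq i j) => [eij | nij]; first by rewrite -eij in rs' ps *; exact: same_head.
case: (boolP ((i.+1 < j)%N || (j.+1 < i)%N)) => [far | near].
  have [p [r1 r2 p1 p2]] := far_descents_reduced hi hj far Di Dj.
  by apply: (bridge _ _ r1 r2 p1 p2); rewrite !word_prod_cons !mulrA T_comm.
have [ej | ei] : j = i.+1 \/ i = j.+1 by move: nij near hi hj; clear; lia.
  subst j; have i_gt0 : (1 <= i)%N by lia.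
  have lt_im : (i < m)%N by lia.
  have [p [r1 r2 p1 p2]] := succ_descents_reduced i_gt0 lt_im Di Dj.
  by apply: (bridge _ _ r1 r2 p1 p2); rewrite !word_prod_cons !mulrA T_braid.
subst i; have j_gt0 : (1 <= j)%N by lia.
have lt_jm : (j < m)%N by lia.
have [p [r1 r2 p1 p2]] := succ_descents_reduced j_gt0 lt_jm Dj Di.
by apply: (bridge _ _ r2 r1 p2 p1); rewrite !word_prod_cons !mulrA T_braid.
Qed.

End Matsumoto.

Section Span.
Variables (R : nzRingType) (M : lmodType R) (I : finType) (f : I -> M).
Implicit Types (P : pred I) (z : M).

Definition in_span P z := exists c : {ffun I -> R}, z = \sum_(i | P i) c i *: f i.

Lemma in_span0 P : in_span P 0.
Proof. by exists 0; rewrite big1 // => i _; rewrite ffunE scale0r. Qed.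

Lemma in_spanD P z1 z2 : in_span P z1 -> in_span P z2 -> in_span P (z1 + z2).
Proof.
move=> [c1 ->] [c2 ->]; exists (c1 + c2); rewrite -big_split.
by apply: eq_bigr => i _; rewrite ffunE scalerDl.
Qed.

Lemma in_spanZ P a z : in_span P z -> in_span P (a *: z).
Proof.
move=> [c ->]; exists [ffun i => a * c i]; rewrite scaler_sumr.
by apply: eq_bigr => i _; rewrite ffunE scalerA.
Qed.

Lemma in_spanB P z1 z2 : in_span P z1 -> in_span P z2 -> in_span P (z1 - z2).
Proof. by move=> h1 h2; rewrite -scaleN1r; apply/in_spanD/in_spanZ. Qed.

Lemma in_span_sum P (J : Type) (s : seq J) (Q : pred J) (h : J -> M) :
  (forall j, Q j -> in_span P (h j)) -> in_span P (\sum_(j <- s | Q j) h j).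
Proof. by move=> hs; apply: big_ind => //; [apply: in_span0 | apply: in_spanD]. Qed.

Lemma in_span_gen P i : P i -> in_span P (f i).
Proof.
move=> Pi; exists [ffun j => (j == i)%:R]; rewrite (bigD1 i) //= ffunE eqxx scale1r.
by rewrite big1 ?addr0 // => j /andP[_ /negPf ji]; rewrite ffunE ji scale0r.
Qed.

Lemma in_span_sub P P' z : subpred P P' -> in_span P z -> in_span P' z.
Proof.
move=> sPP' [c ->]; exists [ffun i => if P i then c i else 0].
rewrite big_mkcond [RHS]big_mkcond; apply: eq_bigr => i _; rewrite ffunE.
by case: (boolP (P i)) => [/sPP' -> | _]; case: (P' i); rewrite ?scale0r.
Qed.

End Span.

Section UnitriangularBasis.
Variables (R : nzRingType) (M : lmodType R) (I : finType).
Variables (e f : I -> M) (lam : I -> nat).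
Hypothesis e_basis : is_Rbasis e.
Hypothesis f_unitri : forall x, in_span e (fun y => lam y < lam x)%N (f x - e x).

Lemma basis_free (c : {ffun I -> R}) : \sum_y c y *: e y = 0 -> c = 0.
Proof.
move=> c0; have [c' [_ uniq_c']] := e_basis 0.
by rewrite -(uniq_c' c (esym c0)) -(uniq_c' 0) // big1 // => y _; rewrite ffunE scale0r.
Qed.

Lemma in_span_basis x : in_span f predT (e x).
Proof.
have [k] := ubnP (lam x); elim: k x => // k IH x lt_xk.
have [a ea] := f_unitri x.
rewrite -[e x](subKr (f x)) ea; apply: in_spanB; first exact: in_span_gen.
apply: in_span_sum => y lt_yx; apply/in_spanZ/IH.
exact: leq_trans lt_yx _.
Qed.

(* The [e]-coordinates give [d y = - \sum_(lam y < lam x) d x * a x y], whose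
   right-hand side vanishes when [lam y] is maximal among the [y] with [d y != 0]. *)
Lemma unitri_free (d : {ffun I -> R}) : \sum_x d x *: f x = 0 -> d = 0.
Proof.
move=> d0; have [a ea] := fin_all_exists f_unitri.
pose b := [ffun y => d y + \sum_(x | (lam y < lam x)%N) d x * a x y].
have b0 : b = 0.
  apply: basis_free; rewrite -[RHS]d0.
  under [RHS]eq_bigr => x _ do rewrite -[f x](subrK (e x)) ea scalerDr scaler_sumr.
  rewrite big_split /= addrC; under eq_bigr => y _ do rewrite ffunE scalerDl.
  rewrite big_split /=; congr (_ + _).
  rewrite (exchange_big_dep predT) //=; apply: eq_bigr => y _.
  by rewrite scaler_suml; apply: eq_bigr => x _; rewrite scalerA.
apply/ffunP => x0; rewrite ffunE; apply/eqP; apply: contraT => dx0.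
have [x dx max_x] : exists2 x, d x != 0 & forall y, d y != 0 -> (lam y <= lam x)%N.
  by case: (@arg_maxnP _ x0 (fun y => d y != 0) lam dx0) => x dx max_x; exists x.
move/ffunP/(_ x): b0; rewrite !ffunE big1 ?addr0 => [/eqP|y lt_xy].
  by rewrite (negPf dx).
suff -> : d y = 0 by rewrite mul0r.
by apply/eqP; apply: contraTT lt_xy => dy; rewrite -leqNgt max_x.
Qed.

Lemma unitri_basis : is_Rbasis f.
Proof.
move=> z; have [c [-> _]] := e_basis z.
have [d ed] : in_span f predT (\sum_y c y *: e y).
  by apply: in_span_sum => y _; apply/in_spanZ/in_span_basis.
exists d; split=> // d' ed'; apply/esym/eqP; rewrite -subr_eq0; apply/eqP.
apply: unitri_free; under eq_bigr => x _ do rewrite !ffunE scalerBl.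
by rewrite sumrB -ed -ed' subrr.
Qed.

End UnitriangularBasis.

Lemma root_prodXsubC_expr (R : comUnitRingType) (A : algType R) (r : nat)
    (u : nat -> R) (x : A) :
  \prod_(1 <= c < r.+1) (x - (u c)%:A) = 0 ->
  exists a : nat -> R, x ^+ r = \sum_(l < r) a l *: x ^+ l.
Proof.
move=> root_x; set p := \prod_(1 <= c < r.+1) ('X - (u c)%:P).
have px : horner_alg x p = 0.
  rewrite /p rmorph_prod -[RHS]root_x; apply: eq_bigr => c _.
  by rewrite rmorphB /= horner_algX horner_algC.
have monic_p : p \is monic by apply: monic_prod_XsubC.
have sz : size p = r.+1 by rewrite /p size_prod_XsubC /index_iota size_iota subn1.
have szm : (size (map_poly (in_alg A) p) <= r.+1)%N.
  by rewrite -sz map_polyE (leq_trans (size_Poly _)) // size_map.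
move: px; rewrite /horner_alg /horner_morph (horner_coef_wide _ szm) big_ord_recr /=.
have lc : p`_r = 1 by move/monicP: monic_p; rewrite lead_coefE sz.
rewrite coef_map_id0 ?scale0r //.
have lcA : GRing.in_alg A p`_r = 1 by rewrite /= lc scale1r.
rewrite lcA mul1r => /eqP; rewrite addrC addr_eq0 => /eqP ->.
exists (fun l => - p`_l); rewrite -sumrN; apply: eq_bigr => l _.
rewrite coef_map_id0 /=; last by rewrite scale0r.
  by rewrite /GRing.in_alg /= -scalerAl mul1r scaleNr.
by rewrite /GRing.in_alg /= scale0r.
Qed.

Lemma expr_in_span_lower (R : comUnitRingType) (A : algType R) (r : nat)
    (u : nat -> R) (x : A) k :
  \prod_(1 <= c < r.+1) (x - (u c)%:A) = 0 ->
  in_span (fun l : 'I_r => x ^+ l) predT (x ^+ k).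
Proof.
move=> root_x; have [a top] := root_prodXsubC_expr root_x.
have top_span : in_span (fun l : 'I_r => x ^+ l) predT (x ^+ r).
  by rewrite top; apply: in_span_sum => l _; apply/in_spanZ/in_span_gen.
elim: k => [|k [c ek]].
  case: r root_x {a top top_span} => [|r _]; last exact: (in_span_gen _ (i := ord0)).
  by rewrite big_geq // => /eqP; rewrite oner_eq0.
rewrite exprS ek mulr_sumr; apply: in_span_sum => l _; rewrite -scalerAr -exprS.
apply: in_spanZ; case: (ltnP l.+1 r) => [lt_lr | ge_lr].
  exact: (in_span_gen _ (i := Ordinal lt_lr)).
by rewrite (_ : l.+1 = r) //; apply/eqP; rewrite eqn_leq ge_lr ltn_ord.
Qed.

Section Monomials.
Variables (m r : nat).
Local Notation N := m.+1.
Local Notation C := {ffun 'I_N -> 'I_r}.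
Variables (R : comUnitRingType) (A : algType R) (u : nat -> R) (t : nat -> A).
Hypothesis t_comm : forall i j, (1 <= i <= N)%N -> (1 <= j <= N)%N ->
  t i * t j = t j * t i.
Hypothesis t_root : forall i, (1 <= i <= N)%N ->
  \prod_(1 <= c < r.+1) (t i - (u c)%:A) = 0.

Local Notation tspan := (in_span (fun c : C => tmon t c) predT).

Definition tmonn (e : 'I_N -> nat) : A := \prod_(i < N) t i.+1 ^+ e i.

Lemma tmon_tmonn (c : C) : tmon t c = tmonn (fun i => c i).
Proof. by []. Qed.

Lemma tmonn_tspan e : tspan (tmonn e).
Proof.
have ea (j : 'I_N) : exists a : {ffun 'I_r -> R},
    t j.+1 ^+ e j = \sum_(l | predT l) a l *: t j.+1 ^+ l.
  by apply: expr_in_span_lower; apply: t_root; have := ltn_ord j; lia.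
have [a {}ea] := fin_all_exists ea.
rewrite /tmonn (eq_bigr _ (fun j _ => ea j)) bigA_distr_bigA /=.
apply: in_span_sum => c _; rewrite scaler_prod.
exact/in_spanZ/(in_span_gen _ (i := c)).
Qed.

Lemma tmonnD e e' : tmonn e * tmonn e' = tmonn (fun i => e i + e' i).
Proof.
rewrite /tmonn -prodrM_comm => [|i j _ _]; first by apply: eq_bigr => i _; rewrite exprD.
apply/commrX/commr_sym/commrX; rewrite /GRing.comm t_comm //;
  by have := ltn_ord i; have := ltn_ord j; lia.
Qed.

Lemma tspan1 : tspan 1.
Proof.
suff -> : 1 = tmonn (fun=> 0%N) by apply: tmonn_tspan.
by rewrite /tmonn big1 // => i _; rewrite expr0.
Qed.

Lemma tspanM x y : tspan x -> tspan y -> tspan (x * y).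
Proof.
move=> [c ->] [d ->]; rewrite mulr_suml; apply: in_span_sum => a _.
rewrite mulr_sumr; apply: in_span_sum => b _; rewrite -scalerAl -scalerAr.
by apply/in_spanZ/in_spanZ; rewrite !tmon_tmonn tmonnD; apply: tmonn_tspan.
Qed.

Lemma tspan_prod (I : Type) (s : seq I) (P : pred I) (h : I -> A) :
  (forall i, P i -> tspan (h i)) -> tspan (\prod_(i <- s | P i) h i).
Proof. by move=> hs; apply: big_ind => //; [apply: tspan1 | apply: tspanM]. Qed.

Lemma tspan_t i : (1 <= i <= N)%N -> tspan (t i).
Proof.
move=> hi; set k : 'I_N := inord i.-1.
suff -> : t i = tmonn (fun j => nat_of_bool (j == k)) by apply: tmonn_tspan.
rewrite /tmonn (eq_bigr (fun j => if j == k then t j.+1 else 1)) => [|j _]; last first.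
  by case: (j == k); rewrite ?expr1 ?expr0.
by rewrite -big_mkcond big_pred1_eq /k inordK ?prednK //; lia.
Qed.

End Monomials.

Section AKAlgebra.
Variables (m r : nat).
Local Notation N := m.+1.
Local Notation C := {ffun 'I_N -> 'I_r}.
Variables (R : comUnitRingType) (A : algType R).
Variables (q : R) (u : nat -> R) (F : nat -> {poly R}) (t T : nat -> A).
Hypothesis rels : AK_relations N r q u F t T.

Local Notation tspan := (in_span (fun c : C => tmon t c) predT).
Local Notation AKcorr := (AKcorr r q u F t).

Lemma AK_t_comm i j : (1 <= i <= N)%N -> (1 <= j <= N)%N -> t i * t j = t j * t i.
Proof. by have [_ [_ [_ [_ [t_comm _]]]]] := rels; apply: t_comm. Qed.

Lemma AK_t_root i : (1 <= i <= N)%N -> \prod_(1 <= c < r.+1) (t i - (u c)%:A) = 0.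
Proof. by have [_ [t_root _]] := rels; apply: t_root. Qed.

Lemma AK_T_t_comm j k : (1 <= j <= m)%N -> (1 <= k <= N)%N -> k != j -> k != j.+1 ->
  T j * t k = t k * T j.
Proof. by have [_ [_ [_ [_ [_ [T_t_comm _]]]]]] := rels; apply: T_t_comm. Qed.

Lemma AK_T_t_corr j : (1 <= j <= m)%N ->
  T j * t j.+1 = t j * T j + AKcorr j.+1 /\ T j * t j = t j.+1 * T j - AKcorr j.+1.
Proof.
by have [_ [_ [_ [_ [_ [_ T_t_corr]]]]]] := rels => hj; apply: (T_t_corr j.+1); lia.
Qed.

Let tspanM := tspanM AK_t_comm AK_t_root.
Let tspan1 := tspan1 AK_t_root.
Let tspan_t := tspan_t AK_t_root.
Let tspan_prod := tspan_prod AK_t_comm AK_t_root.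

Lemma tspan_exp i k : (1 <= i <= N)%N -> tspan (t i ^+ k).
Proof.
move=> hi; elim: k => [|k IHk]; first by rewrite expr0; apply: tspan1.
by rewrite exprS; apply: tspanM IHk; apply: tspan_t.
Qed.

Lemma tspan_peval p i : (1 <= i <= N)%N -> tspan (peval p (t i)).
Proof. by move=> hi; apply: in_span_sum => k _; apply/in_spanZ/tspan_exp. Qed.

Lemma tspan_AKcorr j : (2 <= j <= N)%N -> tspan (AKcorr j).
Proof.
move=> hj; apply: in_span_sum => c1 _; apply: in_span_sum => c2 _.
by apply/in_spanZ/tspanM; apply: tspan_peval; lia.
Qed.

Lemma tspan_Bp i j : tspan (Bp N r q u t i j).
Proof.
apply/in_spanZ/in_span_sum => k _; apply: tspan_prod => l _.
apply: tspan_prod => c _.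
apply: tspanM; last exact/in_spanZ/tspan1.
by apply: in_spanB; [apply: tspan_t; have := ltn_ord l; lia | apply/in_spanZ/tspan1].
Qed.

Definition T_reorder j x :=
  exists x1 x2, [/\ tspan x1, tspan x2 & T j * x = x1 * T j + x2].

Lemma T_reorder1 j : T_reorder j 1.
Proof.
by exists 1, 0; split; [exact: tspan1 | exact: in_span0 | rewrite mulr1 mul1r addr0].
Qed.

Lemma T_reorderM j x y : T_reorder j x -> T_reorder j y -> tspan y ->
  T_reorder j (x * y).
Proof.
move=> [x1 [x2 [s1 s2 ex]]] [y1 [y2 [s3 s4 ey]]] sy.
exists (x1 * y1), (x1 * y2 + x2 * y); split; try exact: tspanM.
  by apply: in_spanD; apply: tspanM.
by rewrite mulrA ex mulrDl -[x1 * _ * y]mulrA ey mulrDr mulrA addrA.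
Qed.

Lemma T_reorder_t j i : (1 <= j <= m)%N -> (1 <= i <= N)%N -> T_reorder j (t i).
Proof.
move=> hj hi; have [corr1 corr2] := AK_T_t_corr hj.
have s_corr : tspan (AKcorr j.+1) by apply: tspan_AKcorr; lia.
have s_t k : (1 <= k <= N)%N -> tspan (t k) by apply: tspan_t.
case: (eqVneq i j.+1) => [-> | nij1].
  by exists (t j), (AKcorr j.+1); split; rewrite ?corr1 //; apply: s_t; lia.
case: (eqVneq i j) => [-> | nij].
  exists (t j.+1), (- AKcorr j.+1); split; rewrite ?corr2 //; first by apply: s_t; lia.
  by rewrite -scaleN1r; apply: in_spanZ.
by exists (t i), 0; split; rewrite ?addr0 ?AK_T_t_comm //; [apply: s_t | apply: in_span0].
Qed.

Lemma T_reorder_tmon j (c : C) : (1 <= j <= m)%N -> T_reorder j (tmon t c).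
Proof.
move=> hj; suff [] : T_reorder j (tmon t c) /\ tspan (tmon t c) by [].
rewrite /tmon; elim/big_rec: _ => [|i z _ [Kz sz]].
  by split; [apply: T_reorder1 | apply: tspan1].
have hi : (1 <= i.+1 <= N)%N by have := ltn_ord i; lia.
split; last by apply: tspanM sz; apply: tspan_exp.
apply: T_reorderM Kz sz; elim: (c i : nat) => [|k IHk].
  by rewrite expr0; apply: T_reorder1.
by rewrite exprS; apply: T_reorderM IHk (tspan_exp _ hi); apply: T_reorder_t.
Qed.

Hypothesis q_unit : q \is a GRing.unit.

Lemma AK_T_sq i : (1 <= i <= m)%N -> T i * T i = (q - q^-1) *: T i + 1.
Proof.
have [quad _] := rels => hi; apply/eqP; rewrite -subr_eq0 -(quad i hi).
rewrite mulrDr !mulrBl mulr_algl mulr_algr -scalerAl mul1r scalerA divrr // scale1r.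
by apply/eqP; rewrite scalerBl opprD opprB !addrA; congr (_ + _); rewrite addrAC.
Qed.

Variable rw : 'S_N -> seq nat.
Hypothesis rw_reduced : forall w, reduced_expr w (rw w).

Let e (x : 'S_N * C) := tmon t x.2 * word_prod T (rw x.1).
Let lam (x : 'S_N * C) := size (rw x.1).
Local Notation V k := (in_span e (fun y => lam y < k)%N).

Lemma tspan_mul_Tw x w : tspan x -> V (size (rw w)).+1 (x * word_prod T (rw w)).
Proof.
move=> [c ->]; rewrite mulr_suml; apply: in_span_sum => d _; rewrite -scalerAl.
exact/in_spanZ/(in_span_gen _ (i := (w, d))).
Qed.

Lemma tspan_mulV x z k : tspan x -> V k z -> V k (x * z).
Proof.
move=> sx [a ->]; rewrite mulr_sumr; apply: in_span_sum => y lt_yk.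
rewrite -scalerAr /e mulrA; apply: in_spanZ.
apply: in_span_sub (tspan_mul_Tw _ (tspanM sx _)) => [y' /leq_trans|]; first exact.
exact: (in_span_gen _ (i := y.2)).
Qed.

Lemma rw_perm w : word_perm N (rw w) = w.
Proof. by have [] := rw_reduced w. Qed.

Lemma rw_size w : size (rw w) = inv_count w.
Proof. by rewrite (reduced_word_size (reduced_expr_reduced (rw_reduced w))) rw_perm. Qed.

Lemma T_word_rw w s : reduced_word m s -> word_perm N s = w ->
  word_prod T s = word_prod T (rw w).
Proof.
have [_ [_ [T_braid [T_comm _]]]] := rels => rs ps.
apply: (matsumoto (m := m)) => //; first exact: reduced_expr_reduced (rw_reduced w).
by rewrite rw_perm.
Qed.

(* If [s_i w < w] then [T_w = T_i T_(s_i w)] and the quadratic relation applies;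
   otherwise [T_i T_w = T_(s_i w)]. *)
Lemma T_mul_Tw i w : (1 <= i <= m)%N ->
  V (size (rw w)).+2 (T i * word_prod T (rw w)).
Proof.
move=> hi; have rs := reduced_expr_reduced (rw_reduced w).
have V_T v : V (size (rw v)).+1 (word_prod T (rw v)).
  by rewrite -[word_prod _ _]mul1r; apply: tspan_mul_Tw tspan1.
have len := inv_count_stransp w hi.
case Di: (descent i w) len => /= len.
  set w' := (stransp N i * w)%g.
  have ew : word_prod T (rw w) = T i * word_prod T (rw w').
    rewrite -word_prod_cons; apply/esym/T_word_rw;
      last by rewrite word_perm_cons rw_perm stranspK.
    apply: reduced_word_cons_descent => //.
      exact: reduced_expr_reduced (rw_reduced w').
    by rewrite rw_perm descent_stranspK // Di.
  rewrite [X in T i * X]ew mulrA AK_T_sq // mulrDl mul1r -scalerAl -ew.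
  apply: in_spanD; first by apply/in_spanZ/(in_span_sub _ (V_T w)) => y /ltnW.
  by apply: in_span_sub (V_T w') => y; rewrite !rw_size /w'; lia.
rewrite -word_prod_cons (T_word_rw (w := (stransp N i * w)%g)).
- by apply: in_span_sub (V_T _) => y; rewrite !rw_size; lia.
- by apply: reduced_word_cons_descent; rewrite // rw_perm Di.
- by rewrite word_perm_cons rw_perm.
Qed.

Lemma T_mulV i z k : (1 <= i <= m)%N -> V k z -> V k.+1 (T i * z).
Proof.
move=> hi [a ->]; rewrite mulr_sumr; apply: in_span_sum => y lt_yk.
rewrite -scalerAr; apply: in_spanZ.
have [x1 [x2 [s1 s2 ex]]] := T_reorder_tmon y.2 hi.
rewrite /e mulrA ex mulrDl -mulrA; apply: in_spanD.
  apply: tspan_mulV s1 _; apply: in_span_sub (T_mul_Tw y.1 hi) => y' /leq_trans.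
  exact.
by apply: in_span_sub (tspan_mul_Tw _ s2) => y' /leq_trans; apply; apply: ltnW.
Qed.

Lemma T_wordV s : word_ok N s -> V (size s).+1 (word_prod T s).
Proof.
elim: s => [_ | i s IH /andP[hi ok]]; last by rewrite word_prod_cons; apply/T_mulV/IH.
have := tspan_mul_Tw 1%g tspan1.
by rewrite (reduced_expr1 (rw_reduced 1%g)) /word_prod big_nil mul1r.
Qed.

Local Notation G := (g N r q u t T).

Lemma g_wordV s : word_ok N s -> V (size s) (word_prod G s - word_prod T s).
Proof.
elim: s => [_ | i s IH /andP[hi ok]] /=.
  by rewrite /word_prod !big_nil subrr; apply: in_span0.
rewrite !word_prod_cons /g mulrDl addrAC -mulrBr; apply: in_spanD; first exact/T_mulV/IH.
rewrite -[word_prod G s](subrK (word_prod T s)) mulrDr.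
apply: in_spanD; apply: tspan_mulV (tspan_Bp _ _) _; last exact: T_wordV.
by apply: (in_span_sub _ (IH ok)) => y /ltnW.
Qed.

Lemma g_basis : is_Rbasis e ->
  is_Rbasis (fun x : 'S_N * C => tmon t x.2 * word_prod G (rw x.1)).
Proof.
move=> e_basis; apply: (unitri_basis e_basis (lam := lam)) => x; rewrite -mulrBr.
apply: tspan_mulV; first exact: (in_span_gen _ (i := x.2)).
by apply: g_wordV; have [] := rw_reduced x.1.
Qed.

End AKAlgebra.

Theorem theorem3p9 (R : idomainType) (A : algType R) (n r : nat)
    (q : R) (u : nat -> R) (F : nat -> {poly R}) (t T : nat -> A)
    (rw : 'S_n -> seq nat) :
  (1 <= n)%N -> (1 <= r)%N ->
  q \is a GRing.unit -> Delta r u \is a GRing.unit ->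
  is_F r u F ->
  (forall w : 'S_n, reduced_expr w (rw w)) ->
  AK_relations n r q u F t T ->
  (* Shoji's basis theorem: {t^c T_w} is an R-basis of A *)
  is_Rbasis (fun x : 'S_n * {ffun 'I_n -> 'I_r} =>
               tmon t x.2 * word_prod T (rw x.1)) ->
  is_Rbasis (fun x : 'S_n * {ffun 'I_n -> 'I_r} =>
               tmon t x.2 * word_prod (g n r q u t T) (rw x.1)).
Proof.
case: n rw => [//|m] rw _ _ q_unit _ _ rw_reduced rels.
exact: (@g_basis m r R A q u F t T rels q_unit rw rw_reduced).
Qed.
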